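(* Consider a stationary memoryless discrete source over a finite alphabet $A$ with $|A|\geq 2$ and symbol distribution $P$. Assume every symbol probability is positive and less than $1$. Let $\rho$ be the reciprocal of the smallest symbol probability, so that $\rho>1$. Let $T$ be a Tunstall parse tree with $n$ leaves, and suppose $$\log_2 n-c(\rho)>0,\qquad\text{where } c(\rho)=\left(\frac{\rho\ln\rho}{\rho-1}-1-\ln\frac{\rho\ln\rho}{\rho-1}\right)\frac{1}{\ln 2}.$$ Then the compression rate $R=\lceil\log_2 n\rceil/E[L]$ of the corresponding variable-to-fixed length code, in which each leaf is encoded by a binary codeword of length $\lceil\log_2 n\rceil$, satisfies $$R\leq\frac{\lceil\log_2 n\rceil\,H(P)}{\log_2 n-c(\rho)}.$$
   Context: A parse tree is a complete $|A|$-ary tree whose edges are labeled by source symbols. Each leaf corresponds to a source segment, namely the string of labels on its root-to-leaf path. The probability of a leaf is the product of the probabilities of its labels. A Tunstall parse tree is obtained by starting from the tree whose root has one child per symbol of $A$, and then repeatedly replacing a leaf of maximum probability by an internal node with $|A|$ children. Here $n$ is the number of leaves obtained after some number of such expansions. $L$ is the length (depth) of the random source segment parsed, i.e., of the leaf reached by the source. $H(P)$ is the source entropy in bits. *)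

From Stdlib Require Import Reals Lra List.
Import ListNotations.
Open Scope R_scope.

(* Alphabet A = {0, ..., k-1}; a source symbol is a nat a < k;
   P : nat -> R gives the symbol probabilities (only values on a < k matter). *)

Definition word_prob (P : nat -> R) (w : list nat) : R :=
  fold_right (fun a r => P a * r) 1 w.

(* A parse tree is represented by its list of leaves (each leaf = the word
   labelling its root-to-leaf path). *)
Definition children (k : nat) (w : list nat) : list (list nat) :=
  map (fun a => w ++ [a]) (seq 0 k).

Inductive tunstall (k : nat) (P : nat -> R) : list (list nat) -> Prop :=
| tunstall_init : tunstall k P (map (fun a => [a]) (seq 0 k))
| tunstall_step : forall l1 w l2,
    tunstall k P (l1 ++ w :: l2) ->
    (forall v, In v (l1 ++ w :: l2) -> word_prob P v <= word_prob P w) ->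
    tunstall k P (l1 ++ l2 ++ children k w).

Definition expected_length (P : nat -> R) (leaves : list (list nat)) : R :=
  fold_right (fun w r => word_prob P w * INR (length w) + r) 0 leaves.

Definition log2 (x : R) : R := ln x / ln 2.

Definition entropy (k : nat) (P : nat -> R) : R :=
  - fold_right (fun a r => P a * log2 (P a) + r) 0 (seq 0 k).

(* Ceiling: Int_part is the floor function. *)
Definition Rceil (x : R) : R := IZR (- Int_part (- x)).

Definition pmin (k : nat) (P : nat -> R) : R :=
  fold_right Rmin (P 0%nat) (map P (seq 0 k)).

Definition c_rho (rho : R) : R :=
  (rho * ln rho / (rho - 1) - 1 - ln (rho * ln rho / (rho - 1))) * (1 / ln 2).

(** Splitting a leaf [w]
    into its children raises both the leaf entropy and [E[L]·H(P)] by
    [P(w)·H(P)], so the leaf entropy equals [E[L]·H(P)].  And all leaf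
    probabilities lie in [[pmin·m, m]], where [m] is the probability of the
    leaf expanded last.  On [[a, ρa]] the convex function [p ln p] lies below
    its chord, so [Σ p ln p ≤ ln a + t - a t n] with [t = ρ ln ρ / (ρ - 1)];
    the bound [ln (n a t) ≤ n a t - 1] eliminates [a] and leaves
    [E[L]·H(P) ≥ log₂ n - c(ρ)], which is the rate bound. *)
From Stdlib Require Import Reals List Lra Psatz.
Import ListNotations.
Open Scope R_scope.

Definition sum_list {A} (f : A -> R) (l : list A) : R :=
  fold_right (fun x r => f x + r) 0 l.

Section SumList.
Context {A : Type}.
Implicit Types (f g : A -> R) (l : list A).

Lemma sum_list_nil f : sum_list f [] = 0.
Proof. reflexivity. Qed.

Lemma sum_list_cons f x l : sum_list f (x :: l) = f x + sum_list f l.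
Proof. reflexivity. Qed.

Lemma sum_list_app f l1 l2 : sum_list f (l1 ++ l2) = sum_list f l1 + sum_list f l2.
Proof.
  induction l1 as [|x l1 IH].
  - rewrite app_nil_l, sum_list_nil. ring.
  - rewrite <-app_comm_cons, !sum_list_cons, IH. ring.
Qed.

Lemma sum_list_map {B} f (h : B -> A) (l : list B) :
  sum_list f (map h l) = sum_list (fun x => f (h x)) l.
Proof.
  induction l as [|x l IH]; [reflexivity|].
  cbn [map]. rewrite !sum_list_cons, IH. reflexivity.
Qed.

Lemma sum_list_ext_in f g l :
  (forall x, In x l -> f x = g x) -> sum_list f l = sum_list g l.
Proof.
  induction l as [|x l IH]; intros Hfg; [reflexivity|].
  rewrite !sum_list_cons, (Hfg x (in_eq x l)), IH; [reflexivity|].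
  intros y Hy. apply Hfg, in_cons, Hy.
Qed.

Lemma sum_list_add f g l :
  sum_list (fun x => f x + g x) l = sum_list f l + sum_list g l.
Proof. induction l as [|x l IH]; rewrite ?sum_list_cons, ?IH; cbn; ring. Qed.

Lemma sum_list_scal_l (c : R) f l :
  sum_list (fun x => c * f x) l = c * sum_list f l.
Proof. induction l as [|x l IH]; rewrite ?sum_list_cons, ?IH; cbn; ring. Qed.

Lemma sum_list_const (c : R) l : sum_list (fun _ => c) l = c * INR (length l).
Proof.
  induction l as [|x l IH]; [cbn; ring|].
  rewrite sum_list_cons, IH, length_cons, S_INR; ring.
Qed.

Lemma sum_list_le f g l :
  (forall x, In x l -> f x <= g x) -> sum_list f l <= sum_list g l.
Proof.
  induction l as [|x l IH]; intros Hfg; [cbn; lra|].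
  rewrite !sum_list_cons.
  apply Rplus_le_compat; [apply Hfg, in_eq | apply IH].
  intros y Hy. apply Hfg, in_cons, Hy.
Qed.

Lemma sum_list_nonneg f l : (forall x, In x l -> 0 <= f x) -> 0 <= sum_list f l.
Proof.
  intros Hf. rewrite <-(Rmult_0_l (INR (length l))), <-sum_list_const.
  now apply sum_list_le.
Qed.

End SumList.

Lemma ln_le_sub_1 x : 0 < x -> ln x <= x - 1.
Proof. intros Hx. pose proof (exp_ineq1_le (ln x)) as H. rewrite exp_ln in H; lra. Qed.

Definition xlnx (x : R) : R := x * ln x.

Lemma xlnx_ge_tangent x y : 0 < x -> 0 < y -> xlnx x + (ln x + 1) * (y - x) <= xlnx y.
Proof.
  intros Hx Hy. unfold xlnx.
  assert (Hxy : ln (x * / y) <= x / y - 1)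
    by (apply ln_le_sub_1, Rdiv_lt_0_compat; assumption).
  rewrite ln_mult, ln_Rinv in Hxy by (try apply Rinv_0_lt_compat; assumption).
  assert (Hscaled : y * (ln x - ln y) <= y * (x / y - 1)) by (apply Rmult_le_compat_l; lra).
  replace (y * (x / y - 1)) with (x - y) in Hscaled by (field; lra).
  lra.
Qed.

(* The tangents at [x] evaluated at [1] and [rho], weighted by [rho - x] and [x - 1]. *)
Lemma xlnx_le_chord x rho : 1 <= x <= rho -> (rho - 1) * xlnx x <= (x - 1) * xlnx rho.
Proof.
  intros [H1x Hxr].
  pose proof (xlnx_ge_tangent x 1 ltac:(lra) ltac:(lra)) as T1.
  pose proof (xlnx_ge_tangent x rho ltac:(lra) ltac:(lra)) as Trho.
  unfold xlnx in T1 at 2; rewrite ln_1, Rmult_0_r in T1.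
  pose proof (Rmult_le_compat_l (rho - x) _ _ ltac:(lra) T1) as W1.
  pose proof (Rmult_le_compat_l (x - 1) _ _ ltac:(lra) Trho) as Wrho.
  lra.
Qed.

Definition chord_slope (rho : R) : R := rho * ln rho / (rho - 1).

Lemma chord_slope_pos rho : 1 < rho -> 0 < chord_slope rho.
Proof.
  intros Hrho. assert (Hln : 0 < ln rho) by (rewrite <-ln_1; apply ln_increasing; lra).
  unfold chord_slope. apply Rdiv_lt_0_compat; nra.
Qed.

Lemma xlnx_le_chord_scaled p a rho : 0 < a -> 1 < rho -> a <= p <= rho * a ->
  xlnx p <= p * (ln a + chord_slope rho) - a * chord_slope rho.
Proof.
  intros Ha Hrho Hp.
  set (x := p / a).
  assert (Hpx : p = a * x) by (unfold x; field; lra).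
  assert (Hx : 1 <= x <= rho).
  { rewrite Hpx in Hp. split; apply Rmult_le_reg_l with a; lra. }
  assert (Hchord : xlnx x <= chord_slope rho * (x - 1)).
  { apply Rmult_le_reg_l with (rho - 1); [lra|].
    unfold chord_slope.
    replace ((rho - 1) * (rho * ln rho / (rho - 1) * (x - 1))) with ((x - 1) * xlnx rho)
      by (unfold xlnx; field; lra).
    now apply xlnx_le_chord. }
  pose proof (Rmult_le_compat_l a _ _ ltac:(lra) Hchord) as Hscaled.
  rewrite Hpx. unfold xlnx in *. rewrite ln_mult by lra. nra.
Qed.

Lemma entropy_ge_ln_card_of_ratio {A} (f : A -> R) (l : list A) a rho :
  0 < a -> 1 < rho -> sum_list f l = 1 ->
  (forall x, In x l -> a <= f x <= rho * a) ->
  let t := chord_slope rho in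
  ln (INR (length l)) - (t - 1 - ln t) <= - sum_list (fun x => xlnx (f x)) l.
Proof.
  intros Ha Hrho Hsum Hf t.
  assert (Ht : 0 < t) by (apply chord_slope_pos; assumption).
  assert (Hn : 0 < INR (length l)).
  { destruct l as [|x l]; [cbn in Hsum; lra|].
    rewrite length_cons, S_INR. pose proof (pos_INR (length l)); lra. }
  assert (Hchords : sum_list (fun x => xlnx (f x)) l
                    <= sum_list (fun x => (ln a + t) * f x + - (a * t) * 1) l).
  { apply sum_list_le; intros x Hx.
    pose proof (xlnx_le_chord_scaled (f x) a rho Ha Hrho (Hf x Hx)) as Hx'.
    fold t in Hx'. lra. }
  rewrite sum_list_add, !sum_list_scal_l, Hsum, sum_list_const in Hchords.
  assert (Hna : 0 < INR (length l) * a) by nra.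
  assert (Hlog : ln (INR (length l) * a * t) <= INR (length l) * a * t - 1)
    by (apply ln_le_sub_1; nra).
  rewrite !ln_mult in Hlog by lra.
  lra.
Qed.

Lemma fold_Rmin_le_In (x0 y : R) (l : list R) : In y l -> fold_right Rmin x0 l <= y.
Proof.
  induction l as [|x l IH]; [intros []|]; intros [<-|Hy]; cbn.
  - apply Rmin_l.
  - eapply Rle_trans; [apply Rmin_r | auto].
Qed.

Lemma fold_Rmin_pos (x0 : R) (l : list R) :
  0 < x0 -> (forall y, In y l -> 0 < y) -> 0 < fold_right Rmin x0 l.
Proof.
  induction l as [|x l IH]; intros H0 Hl; cbn; [assumption|].
  apply Rmin_pos; [apply Hl, in_eq | apply IH; [assumption|]].
  intros y Hy. apply Hl, in_cons, Hy.
Qed.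

Lemma pmin_le (k : nat) (P : nat -> R) a : (a < k)%nat -> pmin k P <= P a.
Proof. intros Ha. apply fold_Rmin_le_In, in_map, in_seq. lia. Qed.

Lemma pmin_pos (k : nat) (P : nat -> R) :
  (0 < k)%nat -> (forall a, (a < k)%nat -> 0 < P a) -> 0 < pmin k P.
Proof.
  intros Hk HP. apply fold_Rmin_pos; [now apply HP|].
  intros y Hy. apply in_map_iff in Hy as [a [<- Ha]]. apply in_seq in Ha.
  apply HP; lia.
Qed.

Definition entropy_nats (k : nat) (P : nat -> R) : R :=
  - sum_list (fun a => xlnx (P a)) (seq 0 k).

Lemma entropy_eq_nats k P : entropy k P = entropy_nats k P / ln 2.
Proof.
  unfold entropy, entropy_nats.
  change (fold_right _ 0 (seq 0 k)) with
    (sum_list (fun a => P a * log2 (P a)) (seq 0 k)).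
  rewrite (sum_list_ext_in _ (fun a => / ln 2 * xlnx (P a))), sum_list_scal_l.
  - unfold Rdiv. ring.
  - intros a _. unfold log2, xlnx, Rdiv. ring.
Qed.

Lemma c_rho_eq_chord_slope rho :
  c_rho rho = (chord_slope rho - 1 - ln (chord_slope rho)) / ln 2.
Proof. unfold c_rho, chord_slope, Rdiv. ring. Qed.

Lemma c_rho_nonneg rho : 1 < rho -> 0 <= c_rho rho.
Proof.
  intros Hrho. rewrite c_rho_eq_chord_slope.
  pose proof (chord_slope_pos rho Hrho) as Ht.
  pose proof (ln_le_sub_1 _ Ht). pose proof ln_lt_2.
  unfold Rdiv. apply Rmult_le_pos; [lra | left; apply Rinv_0_lt_compat; lra].
Qed.

Lemma Rceil_ge x : x <= Rceil x.
Proof. unfold Rceil. rewrite opp_IZR. pose proof (base_Int_part (- x)). lra. Qed.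

Lemma Rdiv_le_mult_div_of_le_mult C E H D :
  0 < D -> D <= E * H -> 0 <= C -> 0 <= E -> C / E <= C * H / D.
Proof.
  intros HD HEH HC HE.
  assert (HE' : 0 < E) by (destruct HE as [|<-]; [assumption | lra]).
  apply Rmult_le_reg_r with (E * D); [nra|].
  replace (C / E * (E * D)) with (C * D) by (field; lra).
  replace (C * H / D * (E * D)) with (C * (E * H)) by (field; lra).
  nra.
Qed.

Lemma word_prob_snoc P w a : word_prob P (w ++ [a]) = word_prob P w * P a.
Proof.
  induction w as [|b w IH].
  - unfold word_prob; cbn. ring.
  - change (P b * word_prob P (w ++ [a]) = P b * word_prob P w * P a).
    rewrite IH. ring.
Qed.

Lemma in_expand_leaf k l1 w l2 v :
  In v (l1 ++ l2 ++ children k w) ->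
  In v (l1 ++ w :: l2) \/ exists a, (a < k)%nat /\ v = w ++ [a].
Proof.
  rewrite app_assoc, in_app_iff. intros [Hv|Hv].
  - left. apply in_app_iff in Hv as [Hv|Hv]; apply in_app_iff; [left | right; right]; exact Hv.
  - right. apply in_map_iff in Hv as [a [<- Ha]]. apply in_seq in Ha.
  exists a; split; [lia | reflexivity].
Qed.

Section Tunstall.
Variables (k : nat) (P : nat -> R).
Hypothesis P_bounds : forall a, (a < k)%nat -> 0 < P a < 1.
Hypothesis P_sum : sum_list P (seq 0 k) = 1.

Lemma sum_children (f : list nat -> R) w :
  sum_list f (children k w) = sum_list (fun a => f (w ++ [a])) (seq 0 k).
Proof. apply sum_list_map. Qed.

Lemma sum_word_prob_children w : sum_list (word_prob P) (children k w) = word_prob P w.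
Proof.
  rewrite sum_children, (sum_list_ext_in _ (fun a => word_prob P w * P a)),
    sum_list_scal_l, P_sum by (intros; apply word_prob_snoc).
  ring.
Qed.

Lemma sum_length_children w :
  sum_list (fun v => word_prob P v * INR (length v)) (children k w)
  = word_prob P w * (INR (length w) + 1).
Proof.
  rewrite sum_children,
    (sum_list_ext_in _ (fun a => word_prob P w * (INR (length w) + 1) * P a)),
    sum_list_scal_l, P_sum.
  - ring.
  - intros a _. rewrite word_prob_snoc, length_app, plus_INR. cbn. ring.
Qed.

Lemma sum_xlnx_children w : 0 < word_prob P w ->
  sum_list (fun v => xlnx (word_prob P v)) (children k w)
  = xlnx (word_prob P w) - word_prob P w * entropy_nats k P.
Proof.
  intros Hw. rewrite sum_children,
    (sum_list_ext_in _ (fun a => xlnx (word_prob P w) * P a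
                                 + word_prob P w * xlnx (P a))),
    sum_list_add, !sum_list_scal_l, P_sum.
  - unfold entropy_nats. ring.
  - intros a Ha. apply in_seq in Ha. pose proof (P_bounds a ltac:(lia)).
    intros. unfold xlnx. rewrite word_prob_snoc, ln_mult by lra. ring.
Qed.

Lemma tunstall_word_prob_pos leaves :
  tunstall k P leaves -> forall w, In w leaves -> 0 < word_prob P w.
Proof.
  induction 1 as [|l1 w l2 _ IH _]; intros v Hv.
  - apply in_map_iff in Hv as [a [<- Ha]]. apply in_seq in Ha.
    unfold word_prob; cbn. rewrite Rmult_1_r. apply P_bounds; lia.
  - destruct (in_expand_leaf k l1 w l2 v Hv) as [Hold | [a [Ha ->]]]; auto.
    rewrite word_prob_snoc. apply Rmult_lt_0_compat; [apply IH | apply P_bounds; lia].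
    rewrite in_app_iff; right; left; reflexivity.
Qed.

Lemma tunstall_word_prob_sum leaves :
  tunstall k P leaves -> sum_list (word_prob P) leaves = 1.
Proof.
  induction 1 as [|l1 w l2 _ IH _].
  - rewrite sum_list_map, <-P_sum. apply sum_list_ext_in.
    intros a _. unfold word_prob; cbn. ring.
  - rewrite !sum_list_app, sum_list_cons in IH.
    rewrite !sum_list_app, sum_word_prob_children. lra.
Qed.

Lemma tunstall_leaf_entropy leaves : tunstall k P leaves ->
  sum_list (fun w => xlnx (word_prob P w)) leaves
  = - expected_length P leaves * entropy_nats k P.
Proof.
  intros Ht. induction Ht as [|l1 w l2 Ht IH _];
    change (expected_length P ?l)
      with (sum_list (fun v => word_prob P v * INR (length v)) l) in *.
  - rewrite !sum_list_map. unfold entropy_nats.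
    rewrite (sum_list_ext_in (fun a => word_prob P [a] * INR (length [a])) P),
      (sum_list_ext_in (fun a => xlnx (word_prob P [a])) (fun a => xlnx (P a))), P_sum.
    + ring.
    + intros a _. unfold word_prob; cbn. now rewrite Rmult_1_r.
    + intros a _. unfold word_prob; cbn. ring.
  - assert (Hw : 0 < word_prob P w).
    { apply (tunstall_word_prob_pos _ Ht). rewrite in_app_iff; right; left; reflexivity. }
    rewrite !sum_list_app, !sum_list_cons in IH.
    rewrite !sum_list_app, sum_xlnx_children, sum_length_children by assumption.
    lra.
Qed.

Hypothesis k_pos : (0 < k)%nat.

Lemma pmin_pos_of_bounds : 0 < pmin k P.
Proof. apply pmin_pos; [assumption | intros a Ha; apply P_bounds, Ha]. Qed.

Lemma tunstall_word_prob_ratio leaves : tunstall k P leaves ->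
  exists m, 0 < m /\ forall v, In v leaves -> pmin k P * m <= word_prob P v <= m.
Proof.
  intros Ht. induction Ht as [|l1 w l2 Ht [m [Hm Hleaves]] Hmax].
  - exists 1. split; [lra|]. intros v Hv.
    apply in_map_iff in Hv as [a [<- Ha]]. apply in_seq in Ha.
    unfold word_prob; cbn. rewrite !Rmult_1_r.
    pose proof (P_bounds a ltac:(lia)). pose proof (pmin_le k P a ltac:(lia)). lra.
  - assert (Hwin : In w (l1 ++ w :: l2)) by (rewrite in_app_iff; right; left; reflexivity).
    pose proof (tunstall_word_prob_pos _ Ht w Hwin) as Hw.
    pose proof (Hleaves w Hwin) as Hwm.
    exists (word_prob P w). split; [assumption|]. intros v Hv.
    destruct (in_expand_leaf k l1 w l2 v Hv) as [Hold | [a [Ha ->]]].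
    + pose proof (tunstall_word_prob_pos _ Ht v Hold) as Hpos.
      pose proof (Hleaves v Hold). pose proof (Hmax v Hold).
      pose proof pmin_pos_of_bounds. nra.
    + rewrite word_prob_snoc.
      pose proof (P_bounds a Ha). pose proof (pmin_le k P a Ha). split; nra.
Qed.

Lemma inv_pmin_gt_1 : 1 < / pmin k P.
Proof.
  pose proof pmin_pos_of_bounds as Hpos.
  assert (Hlt1 : pmin k P < 1).
  { eapply Rle_lt_trans; [apply (pmin_le k P 0 k_pos) | apply P_bounds, k_pos]. }
  rewrite <-Rinv_1. apply Rinv_lt_contravar; lra.
Qed.

Lemma tunstall_log2_sub_c_rho_le leaves : tunstall k P leaves ->
  log2 (INR (length leaves)) - c_rho (/ pmin k P)
  <= expected_length P leaves * entropy k P.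
Proof.
  intros Ht.
  pose proof pmin_pos_of_bounds as Hpos.
  destruct (tunstall_word_prob_ratio _ Ht) as [m [Hm Hleaves]].
  pose proof (entropy_ge_ln_card_of_ratio (word_prob P) leaves (pmin k P * m)
    (/ pmin k P) ltac:(nra) inv_pmin_gt_1 (tunstall_word_prob_sum _ Ht)) as Hent.
  rewrite tunstall_leaf_entropy in Hent by assumption.
  replace (/ pmin k P * (pmin k P * m)) with m in Hent by (field; lra).
  specialize (Hent Hleaves).
  rewrite entropy_eq_nats, c_rho_eq_chord_slope. unfold log2, Rdiv.
  rewrite <-Rmult_minus_distr_r, <-Rmult_assoc.
  pose proof ln_lt_2.
  apply Rmult_le_compat_r; [left; apply Rinv_0_lt_compat|]; lra.
Qed.

Lemma tunstall_expected_length_nonneg leaves :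
  tunstall k P leaves -> 0 <= expected_length P leaves.
Proof.
  intros Ht. apply (sum_list_nonneg (fun v => word_prob P v * INR (length v))).
  intros v Hv. pose proof (tunstall_word_prob_pos _ Ht v Hv).
  pose proof (pos_INR (length v)). nra.
Qed.

End Tunstall.

Theorem theorem4 (k : nat) (P : nat -> R) (leaves : list (list nat)) :
  (2 <= k)%nat ->
  (forall a, (a < k)%nat -> 0 < P a < 1) ->
  fold_right (fun a r => P a + r) 0 (seq 0 k) = 1 ->
  tunstall k P leaves ->
  let n := INR (length leaves) in
  let rho := / pmin k P in
  log2 n - c_rho rho > 0 ->
  Rceil (log2 n) / expected_length P leaves
    <= Rceil (log2 n) * entropy k P / (log2 n - c_rho rho).
Proof.
  intros Hk P_bounds P_sum Ht n rho Hgap.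
  assert (k_pos : (0 < k)%nat) by lia.
  pose proof (c_rho_nonneg rho (inv_pmin_gt_1 k P P_bounds k_pos)) as Hc.
  apply Rdiv_le_mult_div_of_le_mult.
  - exact Hgap.
  - exact (tunstall_log2_sub_c_rho_le k P P_bounds P_sum k_pos leaves Ht).
  - pose proof (Rceil_ge (log2 n)). lra.
  - exact (tunstall_expected_length_nonneg k P P_bounds leaves Ht).
Qed.
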